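(* Let $t$ be a $\lambda\mu\mathrm{T}$-term in $\to$-normal form such that $\emptyset;\Delta\vdash t:\rho$ for some $\Delta$ and $\rho$. Then either $t$ is a value, or $t\equiv\mu\alpha.[\beta]v$ for some $\mu$-variables $\alpha,\beta$ and some value $v$.
   Context: The calculus $\lambda\mu\mathrm{T}$. Types: $\rho,\sigma,\tau ::= \mathbb{N} \mid \sigma\to\tau$. Over infinite sets of $\lambda$-variables $x,y,\dots$ and $\mu$-variables $\alpha,\beta,\gamma,\dots$, terms and commands are mutually defined by $t,r,s ::= x \mid \lambda x{:}\rho.r \mid t\,s \mid \mu\alpha{:}\rho.c \mid 0 \mid \mathsf{S}\,t \mid \mathsf{nrec}_\rho\ r\ s\ t$ and $c ::= [\alpha]t$ (type annotations often omitted). $\lambda x$ binds $x$, $\mu\alpha$ binds $\alpha$; terms are considered modulo renaming of bound variables; $FV(t)$, $FCV(t)$ are the free $\lambda$- and $\mu$-variables. $t[x:=r]$ is capture-avoiding substitution. Numerals: $\underline{n} := \mathsf{S}^n 0$. Contexts: $E ::= \Box \mid E\,t \mid \mathsf{S}\,E \mid \mathsf{nrec}\ r\ s\ E$; $E[u]$ is the result of filling the hole with $u$. Structural substitution $t[\alpha:=\beta E]$ ($\beta$ a $\mu$-variable, $E$ a context) is defined homomorphically on all constructs (capture-avoiding for both kinds of variables) except $([\alpha]u)[\alpha:=\beta E] := [\beta]E[u[\alpha:=\beta E]]$ (and $([\gamma]u)[\alpha:=\beta E]:=[\gamma](u[\alpha:=\beta E])$ for $\gamma\neq\alpha$). Typing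 judgments $\Gamma;\Delta\vdash t:\rho$ and $\Gamma;\Delta\vdash c$ ($\Gamma$ assigns types to $\lambda$-variables, $\Delta$ to $\mu$-variables) are generated by: (var) $x:\rho\in\Gamma \Rightarrow \Gamma;\Delta\vdash x:\rho$; (lambda) $\Gamma,x:\sigma;\Delta\vdash t:\tau \Rightarrow \Gamma;\Delta\vdash\lambda x{:}\sigma.t:\sigma\to\tau$; (app) $\Gamma;\Delta\vdash t:\sigma\to\tau$ and $\Gamma;\Delta\vdash s:\sigma$ $\Rightarrow \Gamma;\Delta\vdash ts:\tau$; (zero) $\Gamma;\Delta\vdash 0:\mathbb{N}$; (suc) $\Gamma;\Delta\vdash t:\mathbb{N}\Rightarrow\Gamma;\Delta\vdash \mathsf{S}\,t:\mathbb{N}$; (nrec) $\Gamma;\Delta\vdash r:\rho$, $\Gamma;\Delta\vdash s:\mathbb{N}\to\rho\to\rho$, $\Gamma;\Delta\vdash t:\mathbb{N}$ $\Rightarrow \Gamma;\Delta\vdash\mathsf{nrec}_\rho\ r\ s\ t:\rho$; (activate) $\Gamma;\Delta,\alpha:\rho\vdash c\Rightarrow\Gamma;\Delta\vdash\mu\alpha{:}\rho.c:\rho$; (passivate) $\Gamma;\Delta\vdash t:\rho$ and $\alpha:\rho\in\Delta$ $\Rightarrow \Gamma;\Delta\vdash[\alpha]t$. Reduction $\to$ is the compatible closure (on terms and commands) of: ($\beta$) $(\lambda x.t)r\to t[x:=r]$; ($\mu\mathsf{S}$) $\mathsf{S}(\mu\alpha.c)\to\mu\alpha.c[\alpha:=\alpha(\mathsf{S}\,\Box)]$;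 ($\mu R$) $(\mu\alpha.c)s\to\mu\alpha.c[\alpha:=\alpha(\Box\,s)]$; ($\mu\eta$) $\mu\alpha.[\alpha]t\to t$ if $\alpha\notin FCV(t)$; ($\mu i$) $[\alpha]\mu\beta.c\to c[\beta:=\alpha\,\Box]$; ($0$) $\mathsf{nrec}\ r\ s\ 0\to r$; ($\mathsf{S}$) $\mathsf{nrec}\ r\ s\ (\mathsf{S}\,\underline{n})\to s\ \underline{n}\ (\mathsf{nrec}\ r\ s\ \underline{n})$; ($\mu\mathbb{N}$) $\mathsf{nrec}\ r\ s\ (\mu\alpha.c)\to\mu\alpha.c[\alpha:=\alpha(\mathsf{nrec}\ r\ s\ \Box)]$. A term is in normal form if no $\to$-step applies to it. Values are defined by $v,w ::= 0 \mid \mathsf{S}\,v \mid \lambda x.r$. *)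

(* The calculus lambda-mu-T with de Bruijn indices:
   two separate index spaces, one for lambda-variables (bound by Lam)
   and one for mu-variables (bound by Mu). Terms modulo alpha-renaming
   are thus represented by plain syntax. *)
From Stdlib Require Import Arith List.
Import ListNotations.

Inductive ty : Type :=
| TNat : ty
| TArr : ty -> ty -> ty.

Inductive term : Type :=
| Var  : nat -> term
| Lam  : ty -> term -> term
| App  : term -> term -> term
| Mu   : ty -> cmd -> term
| Zero : term
| Suc  : term -> term
| Nrec : ty -> term -> term -> term -> term
with cmd : Type :=
| Pass : nat -> term -> cmd.                 (* [alpha] t, alpha a mu-variable index *)

Fixpoint numeral (n : nat) : term :=
  match n with O => Zero | S m => Suc (numeral m) end.

Definition up (f : nat -> nat) : nat -> nat :=
  fun n => match n with O => O | S m => S (f m) end.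

Fixpoint rnl (f : nat -> nat) (t : term) : term :=
  match t with
  | Var x => Var (f x)
  | Lam T r => Lam T (rnl (up f) r)
  | App a b => App (rnl f a) (rnl f b)
  | Mu T c => Mu T (rnl_c f c)
  | Zero => Zero
  | Suc a => Suc (rnl f a)
  | Nrec T r s a => Nrec T (rnl f r) (rnl f s) (rnl f a)
  end
with rnl_c (f : nat -> nat) (c : cmd) : cmd :=
  match c with Pass b u => Pass b (rnl f u) end.

Fixpoint rnm (f : nat -> nat) (t : term) : term :=
  match t with
  | Var x => Var x
  | Lam T r => Lam T (rnm f r)
  | App a b => App (rnm f a) (rnm f b)
  | Mu T c => Mu T (rnm_c (up f) c)
  | Zero => Zero
  | Suc a => Suc (rnm f a)
  | Nrec T r s a => Nrec T (rnm f r) (rnm f s) (rnm f a)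
  end
with rnm_c (f : nat -> nat) (c : cmd) : cmd :=
  match c with Pass b u => Pass (f b) (rnm f u) end.

(* capture-avoiding substitution t[x_k := r] (the binder of x_k is removed,
   so lambda-variables above k are decremented) *)
Fixpoint subst (k : nat) (r : term) (t : term) : term :=
  match t with
  | Var x => if Nat.eqb x k then r
             else if Nat.ltb k x then Var (x - 1) else Var x
  | Lam T b => Lam T (subst (S k) (rnl S r) b)
  | App a b => App (subst k r a) (subst k r b)
  | Mu T c => Mu T (subst_c k (rnm S r) c)
  | Zero => Zero
  | Suc a => Suc (subst k r a)
  | Nrec T a b c => Nrec T (subst k r a) (subst k r b) (subst k r c)
  end
with subst_c (k : nat) (r : term) (c : cmd) : cmd :=
  match c with Pass b u => Pass b (subst k r u) end.

Inductive ectx : Type :=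
| Hole  : ectx
| CApp  : ectx -> term -> ectx
| CSuc  : ectx -> ectx
| CNrec : ty -> term -> term -> ectx -> ectx.

Fixpoint fill (E : ectx) (u : term) : term :=
  match E with
  | Hole => u
  | CApp E' s => App (fill E' u) s
  | CSuc E' => Suc (fill E' u)
  | CNrec T r s E' => Nrec T r s (fill E' u)
  end.

Fixpoint ectx_rnl (f : nat -> nat) (E : ectx) : ectx :=
  match E with
  | Hole => Hole
  | CApp E' s => CApp (ectx_rnl f E') (rnl f s)
  | CSuc E' => CSuc (ectx_rnl f E')
  | CNrec T r s E' => CNrec T (rnl f r) (rnl f s) (ectx_rnl f E')
  end.

Fixpoint ectx_rnm (f : nat -> nat) (E : ectx) : ectx :=
  match E with
  | Hole => Hole
  | CApp E' s => CApp (ectx_rnm f E') (rnm f s)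
  | CSuc E' => CSuc (ectx_rnm f E')
  | CNrec T r s E' => CNrec T (rnm f r) (rnm f s) (ectx_rnm f E')
  end.

(* Structural substitution, general form: the mu-variable k is the one
   being substituted; every command [g]u becomes [f g]E[u'] if g = k and
   [f g]u' otherwise (u' the recursive result).  f renames the mu-variables
   (it sends k to the target beta, and reindexes the others when a binder
   disappears). *)
Fixpoint sst (k : nat) (f : nat -> nat) (E : ectx) (t : term) : term :=
  match t with
  | Var x => Var x
  | Lam T r => Lam T (sst k f (ectx_rnl S E) r)
  | App a b => App (sst k f E a) (sst k f E b)
  | Mu T c => Mu T (sst_c (S k) (up f) (ectx_rnm S E) c)
  | Zero => Zero
  | Suc a => Suc (sst k f E a)
  | Nrec T r s a => Nrec T (sst k f E r) (sst k f E s) (sst k f E a)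
  end
with sst_c (k : nat) (f : nat -> nat) (E : ectx) (c : cmd) : cmd :=
  match c with
  | Pass g u => if Nat.eqb g k then Pass (f g) (fill E (sst k f E u))
                else Pass (f g) (sst k f E u)
  end.

(* c[alpha := alpha E] where alpha is the mu-variable bound right outside c
   (index 0 in c); E is given in the scope of c *)
Definition sst_self (E : ectx) (c : cmd) : cmd := sst_c 0 (fun n => n) E c.

(* c[beta := alpha []] where beta is index 0 of c (its binder is removed)
   and alpha is a mu-variable of the outer scope *)
Definition mren_out (a : nat) (c : cmd) : cmd :=
  rnm_c (fun n => match n with O => a | S m => m end) c.

Fixpoint mfree (k : nat) (t : term) : bool :=
  match t with
  | Var _ => false
  | Lam _ r => mfree k r
  | App a b => mfree k a || mfree k b
  | Mu _ c => mfree_c (S k) c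
  | Zero => false
  | Suc a => mfree k a
  | Nrec _ r s a => mfree k r || mfree k s || mfree k a
  end
with mfree_c (k : nat) (c : cmd) : bool :=
  match c with Pass g u => Nat.eqb g k || mfree k u end.

Inductive step : term -> term -> Prop :=
| s_beta : forall T t r, step (App (Lam T t) r) (subst 0 r t)
| s_muS : forall T c, step (Suc (Mu T c)) (Mu T (sst_self (CSuc Hole) c))
| s_muR : forall T c s,
    step (App (Mu T c) s) (Mu T (sst_self (CApp Hole (rnm S s)) c))
| s_mueta : forall T t, mfree 0 t = false ->
    step (Mu T (Pass 0 t)) (rnm (fun n => n - 1) t)
| s_zero : forall T r s, step (Nrec T r s Zero) r
| s_suc : forall T r s n,
    step (Nrec T r s (Suc (numeral n))) (App (App s (numeral n)) (Nrec T r s (numeral n)))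
| s_muN : forall T r s T' c,
    step (Nrec T r s (Mu T' c))
         (Mu T' (sst_self (CNrec T (rnm S r) (rnm S s) Hole) c))
| s_lam : forall T r r', step r r' -> step (Lam T r) (Lam T r')
| s_appl : forall a a' b, step a a' -> step (App a b) (App a' b)
| s_appr : forall a b b', step b b' -> step (App a b) (App a b')
| s_mu : forall T c c', step_c c c' -> step (Mu T c) (Mu T c')
| s_succ : forall a a', step a a' -> step (Suc a) (Suc a')
| s_nrec1 : forall T r r' s a, step r r' -> step (Nrec T r s a) (Nrec T r' s a)
| s_nrec2 : forall T r s s' a, step s s' -> step (Nrec T r s a) (Nrec T r s' a)
| s_nrec3 : forall T r s a a', step a a' -> step (Nrec T r s a) (Nrec T r s a')
with step_c : cmd -> cmd -> Prop :=
| s_mui : forall a T c, step_c (Pass a (Mu T c)) (mren_out a c)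
| s_pass : forall a u u', step u u' -> step_c (Pass a u) (Pass a u').

Definition normal (t : term) : Prop := forall t', ~ step t t'.

Inductive value : term -> Prop :=
| v_zero : value Zero
| v_suc : forall v, value v -> value (Suc v)
| v_lam : forall T r, value (Lam T r).

Inductive typ : list ty -> list ty -> term -> ty -> Prop :=
| t_var : forall G D x T, nth_error G x = Some T -> typ G D (Var x) T
| t_lam : forall G D s t T, typ (s :: G) D t T -> typ G D (Lam s t) (TArr s T)
| t_app : forall G D t s A B, typ G D t (TArr A B) -> typ G D s A -> typ G D (App t s) B
| t_zero : forall G D, typ G D Zero TNat
| t_suc : forall G D t, typ G D t TNat -> typ G D (Suc t) TNat
| t_nrec : forall G D T r s t, typ G D r T -> typ G D s (TArr TNat (TArr T T)) ->
    typ G D t TNat -> typ G D (Nrec T r s t) T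
| t_mu : forall G D T c, typ_c G (T :: D) c -> typ G D (Mu T c) T
with typ_c : list ty -> list ty -> cmd -> Prop :=
| t_pass : forall G D a t T, typ G D t T -> nth_error D a = Some T -> typ_c G D (Pass a t).

(* The proof is an
   induction on the typing derivation (with the lambda-context empty, which
   rules out variables), using two kinds of facts:
   - normality is inherited by the immediate subterms in head position
     (function part of an application, argument of S, scrutinee of nrec,
     body of a mu or of a command);
   - by the canonical-forms lemmas (a value of type N is a numeral, a value
     of arrow type is an abstraction), a canonical term in head position of
     an application or of nrec always creates a redex (beta, muR, 0, S,
     muN), and one under S or [a] is either a value or creates a redex
     (muS, mu-i).  Hence application and nrec never occur at the top of a
     closed normal form, and the other constructors preserve canonicity. *)
From Stdlib Require Import List.
Import ListNotations.

Scheme typ_mut := Induction for typ Sort Prop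
with typ_c_mut := Induction for typ_c Sort Prop.

Definition canonical (t : term) : Prop :=
  value t \/ exists (T : ty) (b : nat) (v : term), t = Mu T (Pass b v) /\ value v.

Definition normal_c (c : cmd) : Prop := forall c', ~ step_c c c'.

Lemma value_nat_numeral (G D : list ty) (v : term) :
  value v -> typ G D v TNat -> exists n, v = numeral n.
Proof.
  intros Hv; revert G D; induction Hv as [| v Hv IH | A' r]; intros G D Ht.
  - exists 0; reflexivity.
  - inversion Ht as [| | | | G' D' v' Hv' | |]; subst.
    destruct (IH _ _ Hv') as [n ->]; exists (S n); reflexivity.
  - inversion Ht.
Qed.

Lemma value_arrow_lam (G D : list ty) (v : term) (A B : ty) :
  value v -> typ G D v (TArr A B) -> exists r, v = Lam A r.
Proof.
  intros Hv Ht; destruct Hv; inversion Ht; subst; eauto.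
Qed.

Lemma normal_app_fun (t s : term) : normal (App t s) -> normal t.
Proof. intros N t' St; apply (N (App t' s)); constructor; exact St. Qed.

Lemma normal_suc_arg (t : term) : normal (Suc t) -> normal t.
Proof. intros N t' St; apply (N (Suc t')); constructor; exact St. Qed.

Lemma normal_nrec_arg (T : ty) (r s t : term) : normal (Nrec T r s t) -> normal t.
Proof. intros N t' St; apply (N (Nrec T r s t')); constructor; exact St. Qed.

Lemma normal_mu_body (T : ty) (c : cmd) : normal (Mu T c) -> normal_c c.
Proof. intros N c' Sc; apply (N (Mu T c')); constructor; exact Sc. Qed.

Lemma normal_c_pass_body (a : nat) (u : term) : normal_c (Pass a u) -> normal u.
Proof. intros N u' Su; apply (N (Pass a u')); constructor; exact Su. Qed.

Lemma canonical_app_redex (G D : list ty) (t s : term) (A B : ty) :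
  typ G D t (TArr A B) -> canonical t -> ~ normal (App t s).
Proof.
  intros Ht [Hv | (T & b & v & -> & _)] N.
  - destruct (value_arrow_lam _ _ _ _ _ Hv Ht) as [r ->].
    exact (N _ (s_beta _ _ _)).
  - exact (N _ (s_muR _ _ _)).
Qed.

Lemma canonical_nrec_redex (G D : list ty) (T : ty) (r s t : term) :
  typ G D t TNat -> canonical t -> ~ normal (Nrec T r s t).
Proof.
  intros Ht [Hv | (T' & b & v & -> & _)] N.
  - destruct (value_nat_numeral _ _ _ Hv Ht) as [[|n] ->].
    + exact (N _ (s_zero _ _ _)).
    + exact (N _ (s_suc _ _ _ _)).
  - exact (N _ (s_muN _ _ _ _ _)).
Qed.

Lemma canonical_suc_value (t : term) :
  canonical t -> normal (Suc t) -> value (Suc t).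
Proof.
  intros [Hv | (T & b & v & -> & _)] N.
  - constructor; exact Hv.
  - exfalso; exact (N _ (s_muS _ _)).
Qed.

Lemma canonical_pass_value (a : nat) (u : term) :
  canonical u -> normal_c (Pass a u) -> value u.
Proof.
  intros [Hv | (T & b & v & -> & _)] N.
  - exact Hv.
  - exfalso; exact (N _ (s_mui _ _ _)).
Qed.

(* The theorem, for an arbitrary derivation whose lambda-context is empty;
   commands are handled simultaneously: a closed normal command [b]u has a
   value as body. *)
Lemma closed_normal_canonical (G D : list ty) (t : term) (rho : ty) :
  typ G D t rho -> G = [] -> normal t -> canonical t.
Proof.
  revert G D t rho.
  apply (typ_mut (fun G D t _ _ => G = [] -> normal t -> canonical t)
                 (fun G D c _ => G = [] -> normal_c c ->
                    match c with Pass _ u => value u end));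
    intros; subst.
  -
    destruct x; discriminate.
  - left; constructor.
  - exfalso; eapply canonical_app_redex; eauto using normal_app_fun.
  - left; constructor.
  - left; apply canonical_suc_value; eauto using normal_suc_arg.
  - exfalso; eapply canonical_nrec_redex; eauto using normal_nrec_arg.
  - destruct c as [b u].
    right; exists T, b, u; split; eauto using normal_mu_body.
  - eapply canonical_pass_value; eauto using normal_c_pass_body.
Qed.

Theorem mainTheorem2 (t : term) (D : list ty) (rho : ty) :
  normal t -> typ [] D t rho ->
  value t \/ exists (T : ty) (b : nat) (v : term), t = Mu T (Pass b v) /\ value v.
Proof.
  intros N Ht; exact (closed_normal_canonical _ _ _ _ Ht eq_refl N).
Qed.
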